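(* Let $n\ge 2$. Under optimal play, the Sign Game on the complete graph $K_n$ is won by Player N, with the following exceptions: if Player N is Player 1 and $n=2$, then Player P wins; if Player N is Player 1 and $n=4$, the game is a draw.
   Context: The Sign Game on a finite simple undirected graph $G$: two players, Player P and Player N, alternate turns; the player who moves first is called Player 1 and the other Player 2 (either of P, N may be Player 1). On a turn, a player chooses a vertex of $G$ not yet assigned a value and assigns it $+1$ or $-1$. The game ends when every vertex has been assigned. The score of an edge $uv$ is the product of the values of $u$ and $v$, and the score $s(G)$ of the game is the sum of the scores of all edges. Player P wins if $s(G)>0$, Player N wins if $s(G)<0$, and the game is a draw if $s(G)=0$. ''Under optimal play'' means both players play optimally, each with primary goal of winning and secondary goal of at least drawing; the result (P wins, N wins, or draw) is the outcome of this finite perfect-information game under such play, i.e. the stated player has a strategy guaranteeing that result (and for a draw, each player can guarantee not losing). $K_n$ is the complete graph on $n$ vertices. *)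

From mathcomp Require Import all_boot all_order all_algebra.
Set Implicit Arguments. Unset Strict Implicit. Unset Printing Implicit Defensive.
Import Order.TTheory GRing.Theory Num.Theory.
Local Open Scope ring_scope.

(* A finite simple graph on vertex set 'I_n is given by an edge relation
   e : rel 'I_n (assumed symmetric and irreflexive where relevant). *)
Definition complete_graph (n : nat) : rel 'I_n := fun i j => i != j.

(* A (partial) assignment: None = not yet assigned,
   Some true = +1, Some false = -1. *)
Definition assignment (n : nat) := {ffun 'I_n -> option bool}.

Definition sign_val (o : option bool) : int :=
  match o with Some true => 1 | Some false => -1 | None => 0 end.

Definition score (n : nat) (e : rel 'I_n) (a : assignment n) : int :=
  \sum_(i < n) \sum_(j < n | ((i < j)%N && e i j)) sign_val (a i) * sign_val (a j).

Definition assign (n : nat) (a : assignment n) (v : 'I_n) (b : bool) : assignment n :=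
  [ffun w => if w == v then Some b else a w].

Definition empty_assignment (n : nat) : assignment n := [ffun => None].

(* Players: true = Player P, false = Player N.
   [can_force e goal me turn k a] : from position [a], with player [turn]
   to move and at most [k] moves remaining, player [me] has a strategy
   guaranteeing that the final score satisfies [goal]. *)
Fixpoint can_force (n : nat) (e : rel 'I_n) (goal : int -> bool)
    (me turn : bool) (k : nat) (a : assignment n) : bool :=
  match k with
  | 0 => goal (score e a)
  | k'.+1 =>
    if [forall v, a v != None] then goal (score e a)
    else if turn == me then
      [exists v, exists b : bool,
          (a v == None) && can_force e goal me (~~ turn) k' (assign a v b)]
    else
      [forall v, forall b : bool,
          (a v == None) ==> can_force e goal me (~~ turn) k' (assign a v b)]
  end.

(* Player [me] can guarantee [goal] in the full game on [e], where
   [pfirst] says whether Player P is Player 1 (moves first).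
   Each move assigns one vertex, so n moves end the game. *)
Definition guarantees (n : nat) (e : rel 'I_n) (pfirst : bool)
    (me : bool) (goal : int -> bool) : bool :=
  can_force e goal me pfirst n (empty_assignment n).

Definition P_wins (n : nat) (e : rel 'I_n) (pfirst : bool) : bool :=
  guarantees e pfirst true (fun s => 0 < s).

Definition N_wins (n : nat) (e : rel 'I_n) (pfirst : bool) : bool :=
  guarantees e pfirst false (fun s => s < 0).

Definition is_draw (n : nat) (e : rel 'I_n) (pfirst : bool) : bool :=
  guarantees e pfirst true (fun s => 0 <= s) &&
  guarantees e pfirst false (fun s => s <= 0).

Arguments P_wins : clear implicits.
Arguments N_wins : clear implicits.
Arguments is_draw : clear implicits.
Arguments complete_graph : clear implicits.

From mathcomp Require Import all_boot all_order all_algebra zify.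
Set Implicit Arguments. Unset Strict Implicit. Unset Printing Implicit Defensive.
Import Order.TTheory GRing.Theory Num.Theory.
Local Open Scope ring_scope.

(* On K_n a complete assignment with sign sum S scores (S^2 - n)/2, because
   2 * sum_(i<j) x_i x_j = S^2 - sum_i x_i^2 and every x_i^2 = 1; moreover
   S = n (mod 2).  So P wants |S| large and N wants it small.  If N always
   plays the sign opposite to the current sum, then |S| <= 1 after N's moves
   and |S| <= 2 after P's moves: the final score is negative, except when n is
   even and P moves last, where it is at most (4 - n)/2, still negative for
   n >= 6.  In that case (N first, n even) P plays the sign of the current
   sum, which is odd hence nonzero on P's turns, so |S| >= 2 at the end: the
   score is positive for n = 2 and nonnegative for n = 4. *)

Lemma sqr_sum_ord (R : comPzRingType) n (F : 'I_n -> R) :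
  (\sum_(i < n) F i) ^+ 2 =
  \sum_(i < n) F i ^+ 2 + (\sum_(i < n) \sum_(j < n | (i < j)%N) F i * F j) *+ 2.
Proof.
have trichotomy i j : F i * F j = (if (i < j)%N then F i * F j else 0)
    + (if (j < i)%N then F j * F i else 0) + (if j == i then F i ^+ 2 else 0).
  case: ltngtP => [lt_ij | lt_ji | /val_inj ->]; rewrite ?eqxx ?expr2 ?addr0 ?add0r //.
    by rewrite -val_eqE (gtn_eqF lt_ij) addr0.
  by rewrite -val_eqE (ltn_eqF lt_ji) addr0 mulrC.
have upper : \sum_(i < n) \sum_(j < n) (if (i < j)%N then F i * F j else 0)
    = \sum_(i < n) \sum_(j < n | (i < j)%N) F i * F j.
  by apply: eq_bigr => i _; rewrite [RHS]big_mkcond.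
rewrite expr2 big_distrl /= (eq_bigr _ (fun i _ => big_distrr _ _ _)) /=.
under eq_bigr do under eq_bigr do rewrite trichotomy.
under eq_bigr do rewrite !big_split /=.
rewrite !big_split /= [X in _ + X + _]exchange_big /= upper addrC mulr2n.
congr (_ + _); apply: eq_bigr => i _.
by rewrite -big_mkcond big_pred1_eq.
Qed.

Definition sign_sum n (a : assignment n) : int := \sum_(i < n) sign_val (a i).

Definition unassigned n (a : assignment n) : nat := #|[pred v | a v == None]|.

Notation filled a := [forall v, a v != None].

Lemma unassigned_assign n (a : assignment n) v b :
  a v = None -> unassigned a = (unassigned (assign a v b)).+1.
Proof.
move=> av; rewrite /unassigned (cardD1 v) inE av eqxx add1n; congr _.+1.
by apply: eq_card => w; rewrite !inE /assign ffunE; case: (w == v).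
Qed.

Lemma filled_unassigned n (a : assignment n) : filled a = (unassigned a == 0%N).
Proof.
apply/forallP/eqP => [filled_a | /card0_eq none_a v].
  by apply: eq_card0 => v; rewrite !inE (negbTE (filled_a v)).
by apply/negP => av; have := none_a v; rewrite !inE av.
Qed.

Lemma unassigned_empty n : unassigned (empty_assignment n) = n.
Proof. by rewrite /unassigned -[RHS]card_ord; apply: eq_card => v; rewrite !inE ffunE. Qed.

Lemma sign_sum_assign n (a : assignment n) v b :
  a v = None -> sign_sum (assign a v b) = sign_sum a + (if b then 1 else -1).
Proof.
move=> av; rewrite /sign_sum (bigD1 v) //= [in RHS](bigD1 v) //= av add0r.
rewrite ffunE eqxx addrC; congr (_ + _).
by apply: eq_bigr => i ne_iv; rewrite ffunE (negbTE ne_iv).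
Qed.

Lemma sign_sum_empty n : sign_sum (empty_assignment n) = 0.
Proof. by rewrite /sign_sum big1 // => i _; rewrite ffunE. Qed.

Lemma sign_sum_filled n (a : assignment n) :
  filled a -> exists t : nat, sign_sum a = t%:Z *+ 2 - n%:Z.
Proof.
move=> /forallP filled_a; exists (\sum_(i < n) (a i == Some true))%N.
rewrite /sign_sum (eq_bigr (fun i => (a i == Some true)%:Z *+ 2 - 1)); last first.
  by move=> i _; move: (filled_a i); case: (a i) => // -[].
rewrite big_split /= sumrN sumr_const card_ord sumrMnl natz.
by congr (_ *+ 2 - _); rewrite -natz natr_sum; apply: eq_bigr => i _; rewrite natz.
Qed.

Lemma score_complete_filled n (a : assignment n) :
  filled a -> score (complete_graph n) a *+ 2 = sign_sum a ^+ 2 - n%:Z.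
Proof.
move=> /forallP filled_a; rewrite /sign_sum sqr_sum_ord.
rewrite (eq_bigr (fun _ => 1)); last first.
  by move=> i _; move: (filled_a i); case: (a i) => // -[].
rewrite sumr_const card_ord natz addrC addKr; congr (_ *+ 2).
apply: eq_bigr => i _; apply: eq_bigl => j.
by rewrite andb_idr // => lt_ij; rewrite /complete_graph neq_ltn lt_ij.
Qed.

Section InvariantStrategy.

Variables (n : nat) (e : rel 'I_n) (goal : int -> bool) (me t_end : bool).
Variable Inv : bool -> assignment n -> Prop.

(* [t_end] is the turn indicator once all vertices are assigned, i.e. the
   player who did not make the last move. *)

Hypothesis Inv_final : forall a : assignment n, filled a -> Inv t_end a -> goal (score e a).
Hypothesis Inv_move : forall a, Inv me a -> ~~ filled a ->
  exists v b, a v = None /\ Inv (~~ me) (assign a v b).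
Hypothesis Inv_reply : forall a v b, Inv (~~ me) a -> a v = None -> Inv me (assign a v b).

Lemma can_force_invariant k t a :
  unassigned a = k -> t (+) odd k = t_end -> Inv t a -> can_force e goal me t k a.
Proof.
elim: k t a => [|k IHk] t a free_a turn_a Inv_a /=.
  by apply: Inv_final; rewrite -?turn_a ?addbF // filled_unassigned free_a.
rewrite filled_unassigned free_a /=.
have next_turn : ~~ t (+) odd k = t_end by rewrite -turn_a /= addbN addNb.
have free_assigned v b : a v = None -> unassigned (assign a v b) = k.
  by move=> av; apply/eq_add_S; rewrite -(unassigned_assign b av).
case: eqP => [t_me | /eqP t_opp].
  subst t; have [|v [b [av Inv_vb]]] := Inv_move Inv_a.
    by rewrite filled_unassigned free_a.
  apply/existsP; exists v; apply/existsP; exists b; rewrite av eqxx.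
  exact: IHk (free_assigned v b av) next_turn Inv_vb.
have {t_opp} t_notme : t = ~~ me by move: t_opp; case: (t); case: (me).
subst t; rewrite negbK in next_turn *.
apply/forallP => v; apply/forallP => b; apply/implyP => /eqP av.
exact: IHk (free_assigned v b av) next_turn (Inv_reply b Inv_a av).
Qed.

Lemma guarantees_invariant pfirst :
  pfirst (+) odd n = t_end -> Inv pfirst (empty_assignment n) -> guarantees e pfirst me goal.
Proof. by move=> turn0; apply: can_force_invariant; rewrite ?unassigned_empty. Qed.

End InvariantStrategy.

Lemma N_guarantees_balanced n pfirst (goal : int -> bool) :
  (forall a : assignment n, filled a ->
     `|sign_sum a| <= (if pfirst (+) odd n then 1 else 2) ->
     goal (score (complete_graph n) a)) ->
  guarantees (complete_graph n) pfirst false goal.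
Proof.
pose Inv (t : bool) (a : assignment n) := `|sign_sum a| <= (if t then 1 else 2).
move=> goal_final; apply: (@guarantees_invariant _ _ _ _ (pfirst (+) odd n) Inv) => //.
- move=> a Inv_a /forallPn [v /negPn /eqP av].
  exists v, (sign_sum a < 0); split => //.
  by move: Inv_a; rewrite /Inv sign_sum_assign //; case: ltP => /=; lia.
- by move=> a v b Inv_a av; move: Inv_a; rewrite /Inv sign_sum_assign //; case: b => /=; lia.
- by rewrite /Inv sign_sum_empty; case: ifP.
Qed.

Lemma P_guarantees_unbalanced n (goal : int -> bool) : (0 < n)%N ->
  (forall a : assignment n, filled a ->
     (if odd n then 1 else 2) <= `|sign_sum a| ->
     goal (score (complete_graph n) a)) ->
  guarantees (complete_graph n) false true goal.
Proof.
pose Inv (t : bool) (a : assignment n) :=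
  if t then 1 <= `|sign_sum a| else (2 <= `|sign_sum a|) || (a == empty_assignment n).
move=> n_gt0 goal_final; apply: (@guarantees_invariant _ _ _ _ (odd n) Inv) => //.
- move=> a filled_a Inv_a; apply: goal_final => //; move: Inv_a; rewrite /Inv.
  case: (odd n) => // /orP[// | /eqP a_empty].
  by move: filled_a; rewrite a_empty filled_unassigned unassigned_empty eqn0Ngt n_gt0.
- move=> a Inv_a /forallPn [v /negPn /eqP av].
  exists v, (0 < sign_sum a); split => //; apply/orP; left.
  by move: Inv_a; rewrite /Inv sign_sum_assign //; case: ltP => /=; lia.
- move=> a v b Inv_a av; rewrite /Inv sign_sum_assign //.
  case/orP: Inv_a => [|/eqP ->]; last by rewrite sign_sum_empty; case: b.
  by case: b => /=; lia.
- by rewrite /Inv eqxx orbT.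
Qed.

Lemma P_wins_K2 : P_wins 2 (complete_graph 2) false.
Proof.
apply: P_guarantees_unbalanced => // a /score_complete_filled.
rewrite mulr2n expr2 /=; nia.
Qed.

Lemma is_draw_K4 : is_draw 4 (complete_graph 4) false.
Proof.
apply/andP; split; [apply: P_guarantees_unbalanced | apply: N_guarantees_balanced] => //;
  by move=> a /score_complete_filled; rewrite mulr2n expr2 /=; nia.
Qed.

Lemma N_wins_complete n (nfirst : bool) : (2 <= n)%N -> ~ (nfirst /\ (n = 2%N \/ n = 4%N)) ->
  N_wins n (complete_graph n) (~~ nfirst).
Proof.
move=> n_ge2 not_exception; apply: N_guarantees_balanced => a filled_a.
have [t sum_t] := sign_sum_filled filled_a.
have := score_complete_filled filled_a; rewrite sum_t !mulr2n expr2.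
have := odd_double_half n; rewrite -muln2.
by case: nfirst not_exception; case: (odd n) => /=; nia.
Qed.

Theorem theorem1 (n : nat) (hn : (2 <= n)%N) (nfirst : bool) :
  (nfirst /\ n = 2%N -> P_wins n (complete_graph n) (~~ nfirst)) /\
  (nfirst /\ n = 4%N -> is_draw n (complete_graph n) (~~ nfirst)) /\
  (~ (nfirst /\ (n = 2%N \/ n = 4%N)) -> N_wins n (complete_graph n) (~~ nfirst)).
Proof.
split; [by case=> -> ->; exact: P_wins_K2 | split; last exact: N_wins_complete].
by case=> -> ->; exact: is_draw_K4.
Qed.
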